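(* Let $d \ge 1$ be an integer, let $X_0, X_1, \dots$ be independent random variables each taking values $0$ and $1$ with probability $1/2$ each, and let $$P_d = P\Big(\exists N > 0 : \sum_{k=0}^{N-1} X_k < \tfrac{1}{d} N\Big).$$ Then $P_1 = P_2 = 1$, and for $d > 2$ the polynomial $g_d(z) = z^d - 2z + 1$ has exactly one root in the open unit disk, this root is real and lies in $(1/2,1)$, and $P_d$ equals this root. *)

From Stdlib Require Import Reals Arith List.
Import ListNotations.
Open Scope R_scope.

(* All 0/1 strings of length M (true = 1), each one has probability 1/2^M. *)
Fixpoint bitstrings (M : nat) : list (list bool) :=
  match M with
  | O => [nil]
  | S m => map (cons true) (bitstrings m) ++ map (cons false) (bitstrings m)
  end.

Definition ones (l : list bool) : nat := length (filter (fun b => b) l).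

(* event: exists N with 0 < N <= length l and  sum_{k<N} X_k < N/d,
   i.e. d * sum_{k<N} X_k < N  (d >= 1). *)
Definition event_upto (d : nat) (l : list bool) : bool :=
  existsb (fun N => Nat.ltb (d * ones (firstn N l)) N) (seq 1 (length l)).

Definition Pfin (d M : nat) : R :=
  INR (length (filter (event_upto d) (bitstrings M))) / 2 ^ M.

(* P_d = lim_{M -> oo} Pfin d M  (continuity of the measure along the
   increasing union of events); "P_d = p" is stated as Un_cv (Pfin d) p. *)

Definition Cx := (R * R)%type.
Definition Cadd (z w : Cx) : Cx := (fst z + fst w, snd z + snd w).
Definition Cmul (z w : Cx) : Cx :=
  (fst z * fst w - snd z * snd w, fst z * snd w + snd z * fst w).
Fixpoint Cpow (z : Cx) (n : nat) : Cx :=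
  match n with O => (1, 0) | S m => Cmul z (Cpow z m) end.
Definition Cnorm2 (z : Cx) : R := fst z ^ 2 + snd z ^ 2.

Definition g (d : nat) (z : Cx) : Cx :=
  Cadd (Cadd (Cpow z d) (-2 * fst z, -2 * snd z)) (1, 0).

(* Read the flips as a walk moving up by 1 on tails and down by d - 1 on heads: P_d is
   the probability that it ever reaches height 1.  Let h_M(k) be the probability of reaching
   height k within M steps.  Splitting on the first flip gives
   h_(M+1)(k) = (h_M(k - 1) + h_M(k + d - 1)) / 2 for k >= 1, and climbing k levels one at a
   time gives h_M(1)^k <= h_(kM)(k).  Hence the limit L = P_d satisfies (1 + L^d) / 2 <= L,
   while induction on M gives h_M(n) <= r^n for every r in [0,1] with (1 + r^d) / 2 <= r:
   L is the least root of g_d in [0,1].  For d <= 2 this root is 1.  For d > 2 it lies in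
   (1/2, 3/4], and a root z of g_d in the unit disk has |z| <= L (the geometric sum
   1 + r + ... + r^(d-1) is increasing and equals 2 at L) and z^d - L^d = 2 (z - L); since
   |z^d - L^d| <= d L^(d-1) |z - L| and d L^(d-1) < 2, this forces z = L. *)

From Pilot Require Import Defs.
From Stdlib Require Import Reals List ZArith Lia Lra.
From Coquelicot Require Import Complex.
Import ListNotations.
Open Scope R_scope.

(* [excess d l N] is the height of the walk with increments [walk_step d] after [N] steps, and
   [reachesb d k l] says that it reaches height [k] along [l]. *)
Definition walk_step (d : nat) (b : bool) : Z := if b then (1 - Z.of_nat d)%Z else 1%Z.

Definition excess (d : nat) (l : list bool) (N : nat) : Z :=
  (Z.of_nat N - Z.of_nat d * Z.of_nat (ones (firstn N l)))%Z.

Fixpoint reachesb (d : nat) (k : Z) (l : list bool) : bool :=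
  (k <=? 0)%Z ||
  match l with [] => false | b :: l' => reachesb d (k - walk_step d b) l' end.

Lemma excess_0 d l : excess d l 0 = 0%Z.
Proof. unfold excess. simpl. lia. Qed.

Lemma excess_cons d b l N : excess d (b :: l) (S N) = (walk_step d b + excess d l N)%Z.
Proof.
  unfold excess, ones, walk_step; cbn [firstn filter].
  destruct b; cbn [length]; lia.
Qed.

Lemma reachesb_spec d k l :
  reachesb d k l = true <-> exists N, (N <= length l)%nat /\ (k <= excess d l N)%Z.
Proof.
  revert k; induction l as [|b l IH]; intro k; cbn [reachesb length];
    rewrite Bool.orb_true_iff, Z.leb_le.
  - split.
    + intros [Hk | Hf]; [|discriminate]. exists 0%nat. rewrite excess_0. split; lia.
    + intros [N [HN Hk]]. left. replace N with 0%nat in Hk by lia.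
      rewrite excess_0 in Hk. exact Hk.
  - rewrite IH. split.
    + intros [Hk | [N [HN Hk]]].
      * exists 0%nat. rewrite excess_0. split; lia.
      * exists (S N). rewrite excess_cons. split; lia.
    + intros [[|N] [HN Hk]].
      * left. rewrite excess_0 in Hk. exact Hk.
      * right. exists N. rewrite excess_cons in Hk. split; lia.
Qed.

Lemma reachesb_antitone d k k' l :
  (k <= k')%Z -> reachesb d k' l = true -> reachesb d k l = true.
Proof.
  rewrite !reachesb_spec. intros Hk [N [HN HN']]. exists N. split; lia.
Qed.

Lemma event_upto_reachesb d l : event_upto d l = reachesb d 1 l.
Proof.
  apply Bool.eq_iff_eq_true. rewrite reachesb_spec. unfold event_upto, excess.
  rewrite existsb_exists. split.
  - intros [N [HN Hlt]]. apply in_seq in HN. apply Nat.ltb_lt in Hlt.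
    exists N. split; lia.
  - intros [N [HN Hk]]. exists N. rewrite in_seq, Nat.ltb_lt. lia.
Qed.

Definition prob (M : nat) (E : list bool -> bool) : R :=
  INR (length (filter E (bitstrings M))) / 2 ^ M.

Lemma length_bitstrings M : length (bitstrings M) = (2 ^ M)%nat.
Proof. induction M; simpl; [reflexivity|]. rewrite length_app, !length_map, IHM. lia. Qed.

Lemma length_filter_mono {A} (E F : A -> bool) (s : list A) :
  (forall x, E x = true -> F x = true) -> (length (filter E s) <= length (filter F s))%nat.
Proof.
  intro EF. induction s as [|x s IH]; simpl; [lia|].
  destruct (E x) eqn:Ex; [rewrite (EF x Ex)|destruct (F x)]; simpl; lia.
Qed.

Lemma prob_mono M E F : (forall l, E l = true -> F l = true) -> prob M E <= prob M F.
Proof.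
  intro EF. unfold prob, Rdiv. apply Rmult_le_compat_r.
  - left. apply Rinv_0_lt_compat, pow_lt. lra.
  - apply le_INR, length_filter_mono, EF.
Qed.

Lemma prob_certain M E : (forall l, E l = true) -> prob M E = 1.
Proof.
  intro HE. unfold prob. rewrite forallb_filter_id, length_bitstrings, pow_INR.
  - replace (INR 2) with 2 by (simpl; lra). field. apply pow_nonzero. lra.
  - apply forallb_forall. intros l _. apply HE.
Qed.

Lemma prob_bounds M E : 0 <= prob M E <= 1.
Proof.
  split.
  - unfold prob, Rdiv. apply Rmult_le_pos; [apply pos_INR|].
    left. apply Rinv_0_lt_compat, pow_lt. lra.
  - rewrite <- (prob_certain M (fun _ => true)) by reflexivity. apply prob_mono. auto.
Qed.

Lemma prob_nil E : E [] = false -> prob 0 E = 0.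
Proof. intro HE. unfold prob. simpl. rewrite HE. simpl. lra. Qed.

Lemma prob_S M E :
  prob (S M) E = (prob M (fun l => E (true :: l)) + prob M (fun l => E (false :: l))) / 2.
Proof.
  unfold prob. cbn [bitstrings].
  rewrite filter_app, length_app, !filter_map_swap, !length_map, plus_INR. simpl pow.
  field. apply pow_nonzero. lra.
Qed.

Lemma prob_ext M E F : (forall l, E l = F l) -> prob M E = prob M F.
Proof. intro EF. unfold prob. rewrite (filter_ext _ _ EF). reflexivity. Qed.

Definition reach (d M : nat) (k : Z) : R := prob M (reachesb d k).

Lemma Pfin_reach d M : Pfin d M = reach d M 1.
Proof. apply prob_ext, event_upto_reachesb. Qed.

Lemma reach_nonpos d M k : (k <= 0)%Z -> reach d M k = 1.
Proof.
  intro Hk. apply prob_certain. intros [|b l]; cbn [reachesb];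
    rewrite (proj2 (Z.leb_le _ _) Hk); reflexivity.
Qed.

Lemma reach_0 d k : (1 <= k)%Z -> reach d 0 k = 0.
Proof.
  intro Hk. apply prob_nil. cbn [reachesb].
  rewrite (proj2 (Z.leb_gt _ _)) by lia. reflexivity.
Qed.

Lemma reach_S d M k : (1 <= k)%Z ->
  reach d (S M) k = (reach d M (k - 1 + Z.of_nat d) + reach d M (k - 1)) / 2.
Proof.
  intro Hk. unfold reach. rewrite prob_S.
  f_equal; f_equal; apply prob_ext; intro l; cbn [reachesb];
    rewrite (proj2 (Z.leb_gt _ _)) by lia; unfold walk_step;
    rewrite Bool.orb_false_l; f_equal; lia.
Qed.

Lemma reach_bounds d M k : 0 <= reach d M k <= 1.
Proof. apply prob_bounds. Qed.

Lemma reach_antitone d M k k' : (k <= k')%Z -> reach d M k' <= reach d M k.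
Proof. intro Hk. apply prob_mono. intro l. apply reachesb_antitone, Hk. Qed.

Lemma reach_le_S d M k : reach d M k <= reach d (S M) k.
Proof.
  revert k; induction M as [|M IH]; intro k;
    (destruct (Z_le_gt_dec k 0) as [Hk|Hk]; [rewrite !reach_nonpos by exact Hk; lra|]).
  - rewrite reach_0 by lia. apply reach_bounds.
  - rewrite (reach_S d (S M)), (reach_S d M) by lia.
    pose proof (IH (k - 1)%Z). pose proof (IH (k - 1 + Z.of_nat d)%Z). lra.
Qed.

Lemma reach_monotone d M M' k : (M <= M')%nat -> reach d M k <= reach d M' k.
Proof. induction 1; [lra|]. pose proof (reach_le_S d m k). lra. Qed.

(* Reaching [a] within [M1] steps and then climbing [b] more within [M2] steps
   suffices for reaching [a + b] within [M1 + M2] steps. *)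
Lemma reach_supermul d M1 M2 a b :
  reach d M1 a * reach d M2 b <= reach d (M1 + M2) (a + b).
Proof.
  revert a; induction M1 as [|M1 IH]; intro a.
  all: destruct (Z_le_gt_dec a 0) as [Ha|Ha];
    [ rewrite reach_nonpos, Rmult_1_l by exact Ha;
      apply Rle_trans with (reach d M2 (a + b));
      [apply reach_antitone; lia | apply reach_monotone; lia] |].
  - rewrite reach_0, Rmult_0_l by lia. apply reach_bounds.
  - destruct (Z_le_gt_dec (a + b) 0) as [Hab|Hab].
    + rewrite (reach_nonpos d _ (a + b)) by exact Hab.
      pose proof (reach_bounds d (S M1) a). pose proof (reach_bounds d M2 b).
      rewrite <- (Rmult_1_l 1). apply Rmult_le_compat; lra.
    + simpl (S M1 + M2)%nat. rewrite !reach_S by lia.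
      pose proof (IH (a - 1)%Z) as IH1. pose proof (IH (a - 1 + Z.of_nat d)%Z) as IH2.
      replace (a - 1 + b)%Z with (a + b - 1)%Z in IH1 by ring.
      replace (a - 1 + Z.of_nat d + b)%Z with (a + b - 1 + Z.of_nat d)%Z in IH2 by ring.
      pose proof (reach_bounds d M2 b). nra.
Qed.

Lemma reach_pow d M n : reach d M 1 ^ n <= reach d (n * M) (Z.of_nat n).
Proof.
  induction n as [|n IH].
  - rewrite (reach_nonpos d _ (Z.of_nat 0)) by lia. simpl. lra.
  - rewrite Nat2Z.inj_succ, <- Z.add_1_l. simpl pow. simpl (S n * M)%nat.
    apply Rle_trans with (reach d M 1 * reach d (n * M) (Z.of_nat n)).
    + apply Rmult_le_compat_l; [apply reach_bounds | exact IH].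
    + apply reach_supermul.
Qed.

Definition phi (d : nat) (r : R) : R := (1 + r ^ d) / 2.

(* The first step is tails with probability 1/2 (and the walk is at height 1); on heads
   it must climb [d] levels, each in time [M]. *)
Lemma phi_reach_le d M : phi d (reach d M 1) <= reach d (S (d * M)) 1.
Proof.
  unfold phi. rewrite reach_S, (reach_nonpos d _ (1 - 1)) by lia.
  pose proof (reach_pow d M d). simpl (1 - 1 + Z.of_nat d)%Z. lra.
Qed.

Lemma reach_le_pow d r : 0 <= r <= 1 -> phi d r <= r ->
  forall M n, reach d M (Z.of_nat n) <= r ^ n.
Proof.
  unfold phi. intros Hr Hphi M. induction M as [|M IH]; intros [|n].
  1, 3: rewrite reach_nonpos by lia; simpl; lra.
  - rewrite reach_0 by lia. apply pow_le. lra.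
  - rewrite reach_S by lia.
    replace (Z.of_nat (S n) - 1)%Z with (Z.of_nat n) by lia.
    replace (Z.of_nat n + Z.of_nat d)%Z with (Z.of_nat (n + d)) by lia.
    pose proof (IH n). pose proof (IH (n + d)%nat). rewrite pow_add in *.
    pose proof (pow_le r n ltac:(lra)). simpl pow. nra.
Qed.

Definition least_prefixpoint01 (f : R -> R) (L : R) : Prop :=
  0 <= L <= 1 /\ f L <= L /\ (forall r, 0 <= r <= 1 -> f r <= r -> L <= r).

Lemma Un_cv_ub u l c : Un_cv u l -> (forall n, u n <= c) -> l <= c.
Proof.
  intros Hu Hc. apply (Rle_cv_lim Hc Hu).
  intros e He. exists 0%nat. intros. unfold Rdist. rewrite Rminus_diag, Rabs_R0. exact He.
Qed.

Lemma Pfin_cv d : exists L, Un_cv (Pfin d) L /\ least_prefixpoint01 (phi d) L.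
Proof.
  assert (Hgrow : Un_growing (Pfin d)).
  { intro M. rewrite !Pfin_reach. apply reach_le_S. }
  assert (Hub : has_ub (Pfin d)).
  { exists 1. intros x [M ->]. rewrite Pfin_reach. apply reach_bounds. }
  destruct (growing_cv _ Hgrow Hub) as [L HL]. exists L.
  pose proof (growing_ineq _ _ Hgrow HL) as Hsup.
  split; [exact HL|]. split; [split|split].
  - pose proof (Hsup 0%nat). rewrite Pfin_reach in *. pose proof (reach_bounds d 0 1). lra.
  - apply (Un_cv_ub _ _ _ HL). intro M. rewrite Pfin_reach. apply reach_bounds.
  - apply (Un_cv_ub (fun M => phi d (Pfin d M))).
    + apply continuity_seq; [unfold phi; reg | exact HL].
    + intro M. pose proof (Hsup (S (d * M))). rewrite !Pfin_reach in *.
      pose proof (phi_reach_le d M). lra.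
  - intros r Hr Hphi. apply (Un_cv_ub _ _ _ HL). intro M. rewrite Pfin_reach.
    pose proof (reach_le_pow d r Hr Hphi M 1). simpl in *. lra.
Qed.

Lemma phi_least_prefixpoint_le2 d L :
  (1 <= d <= 2)%nat -> least_prefixpoint01 (phi d) L -> L = 1.
Proof.
  unfold phi. intros Hd [HL [Hphi _]].
  destruct d as [|[|[|d]]]; try lia; simpl in Hphi; nra.
Qed.

Lemma phi_le_mono d s r : 0 <= s <= r -> phi d s <= phi d r.
Proof. intro Hsr. unfold phi. pose proof (pow_incr s r d Hsr). lra. Qed.

Lemma phi_least_prefixpoint_gt2 d L : (2 < d)%nat -> least_prefixpoint01 (phi d) L ->
  1/2 < L <= 3/4 /\ L ^ d = 2 * L - 1.
Proof.
  intros Hd [HL [Hphi Hleast]].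
  assert (HL34 : L <= 3/4).
  { apply Hleast; [lra|]. unfold phi.
    replace d with (3 + (d - 3))%nat by lia. rewrite pow_add.
    pose proof (pow_incr (3/4) 1 (d - 3) ltac:(lra)). rewrite pow1 in *.
    pose proof (pow_le (3/4) (d - 3) ltac:(lra)). simpl. nra. }
  assert (Hfix : phi d L = L).
  { destruct (Rle_lt_or_eq_dec _ _ Hphi) as [Hlt|]; [exfalso|assumption].
    assert (Hpos : 1/2 <= phi d L) by (unfold phi; pose proof (pow_le L d ltac:(lra)); lra).
    (* [L - e] is a smaller prefixpoint. *)
    set (e := (L - phi d L) / 2).
    assert (L <= L - e); [|unfold e in *; lra].
    apply Hleast; [unfold e; lra|].
    pose proof (phi_le_mono d (L - e) L ltac:(unfold e; lra)). unfold e in *. lra. }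
  unfold phi in Hfix. pose proof (pow_le L d ltac:(lra)).
  pose proof (pow_lt L d ltac:(lra)). split; lra.
Qed.

Lemma geom_sum_lt n s r : (1 <= n)%nat -> 0 <= s < r ->
  sum_f_R0 (fun k => s ^ k) n < sum_f_R0 (fun k => r ^ k) n.
Proof.
  intros Hn Hsr. induction n as [|n IH]; [lia|].
  rewrite !tech5. pose proof (pow_incr s r (S n) ltac:(lra)).
  destruct n as [|n]; [simpl; lra|]. specialize (IH ltac:(lia)). lra.
Qed.

Lemma geom_sum_gt_last n r : (1 <= n)%nat -> 0 < r < 1 ->
  INR (S n) * r ^ n < sum_f_R0 (fun k => r ^ k) n.
Proof.
  intros Hn Hr. induction n as [|n IH]; [lia|].
  rewrite tech5, S_INR. destruct n as [|n]; [simpl; lra|].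
  specialize (IH ltac:(lia)).
  assert (Hdec : r ^ S (S n) <= r ^ S n).
  { change (r * r ^ S n <= r ^ S n). pose proof (pow_le r (S n)). nra. }
  pose proof (pos_INR (S (S n))). nra.
Qed.

Lemma root_geom_sum d L : (1 <= d)%nat -> L <> 1 -> L ^ d = 2 * L - 1 ->
  sum_f_R0 (fun k => L ^ k) (d - 1) = 2.
Proof.
  intros Hd HL Hroot. pose proof (GP_finite L (d - 1)) as Hgp.
  replace (d - 1 + 1)%nat with d in Hgp by lia. rewrite Hroot in Hgp.
  apply (Rmult_eq_reg_r (L - 1)); [lra | intro; apply HL; lra].
Qed.

Lemma le_root_of_pow_ge d L r : (2 <= d)%nat -> 0 < L < 1 -> L ^ d = 2 * L - 1 ->
  0 <= r < 1 -> 2 * r - 1 <= r ^ d -> r <= L.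
Proof.
  intros Hd HL Hroot Hr Hrd. apply Rnot_lt_le. intro HLr.
  pose proof (geom_sum_lt (d - 1) L r ltac:(lia) ltac:(lra)) as Hlt.
  rewrite (root_geom_sum d L) in Hlt by (lia || lra).
  pose proof (GP_finite r (d - 1)) as Hgp. replace (d - 1 + 1)%nat with d in Hgp by lia.
  nra.
Qed.

Lemma root_deriv_lt d L : (2 <= d)%nat -> 0 < L < 1 -> L ^ d = 2 * L - 1 ->
  INR d * L ^ (d - 1) < 2.
Proof.
  intros Hd HL Hroot. rewrite <- (root_geom_sum d L) by (lia || lra).
  replace d with (S (d - 1)) at 1 by lia. apply geom_sum_gt_last; [lia | lra].
Qed.

Lemma Defs_Cpow (z : C) n : Defs.Cpow z n = (z ^ n)%C.
Proof. induction n as [|n IH]; simpl; [reflexivity|]. rewrite IH. reflexivity. Qed.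

Lemma g_eq d (z : C) : g d z = (z ^ d - 2 * z + 1)%C.
Proof.
  unfold g, Cadd. rewrite Defs_Cpow. destruct (z ^ d)%C as [a b]. destruct z as [x y].
  unfold Cplus, Cminus, Copp, Cmult, RtoC. simpl. f_equal; ring.
Qed.

Lemma g_zero_iff d (z : C) : g d z = (0, 0) <-> (z ^ d = 2 * z - 1)%C.
Proof.
  rewrite g_eq. change ((z ^ d - 2 * z + 1)%C = RtoC 0 :> C <-> (z ^ d = 2 * z - 1)%C).
  split; intro H.
  - replace (z ^ d)%C with ((z ^ d - 2 * z + 1) + (2 * z - 1))%C by ring. rewrite H. ring.
  - rewrite H. ring.
Qed.

Lemma Cmod_lt_1 (z : C) : Cnorm2 z < 1 -> Cmod z < 1.
Proof.
  unfold Cnorm2. intro Hz. pose proof (Cmod2_alt z) as Hm. pose proof (Cmod_ge_0 z).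
  unfold Re, Im in Hm. nra.
Qed.

Lemma Cpow_sub_Cmod_le z L n : 0 <= L -> Cmod z <= L ->
  Cmod (z ^ n - L ^ n) <= INR n * L ^ pred n * Cmod (z - L).
Proof.
  intros HL Hz. pose proof (Cmod_ge_0 (z - L)).
  induction n as [|n IH].
  - replace (z ^ 0 - L ^ 0)%C with (RtoC 0) by (simpl; ring). rewrite Cmod_0. simpl. lra.
  - replace (z ^ S n - L ^ S n)%C with (z * (z ^ n - L ^ n) + L ^ n * (z - L))%C
      by (simpl; ring).
    eapply Rle_trans; [apply Cmod_triangle|].
    rewrite !Cmod_mult, Cmod_pow, Cmod_R, Rabs_pos_eq by exact HL.
    assert (Hpred : L * (INR n * L ^ pred n) = INR n * L ^ n).
    { destruct n; simpl; ring. }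
    pose proof (Cmod_ge_0 (z ^ n - L ^ n)). pose proof (pow_le L n HL).
    rewrite S_INR. simpl pred.
    apply Rle_trans with (L * (INR n * L ^ pred n * Cmod (z - L)) + L ^ n * Cmod (z - L)).
    + apply Rplus_le_compat_r, Rmult_le_compat; auto using Cmod_ge_0.
    + rewrite <- Rmult_assoc, Hpred. lra.
Qed.

Lemma disk_root_unique d L : (2 <= d)%nat -> 0 < L < 1 -> L ^ d = 2 * L - 1 ->
  forall z, Cmod z < 1 -> (z ^ d = 2 * z - 1)%C -> z = RtoC L.
Proof.
  intros Hd HL Hroot z Hz Hzroot.
  assert (Hmod : 2 * Cmod z - 1 <= Cmod z ^ d).
  { rewrite <- Cmod_pow, Hzroot.
    replace (2 * Cmod z) with (Cmod (2 * z - 1 + 1)).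
    - pose proof (Cmod_triangle (2 * z - 1) 1). rewrite Cmod_1 in *. lra.
    - replace (2 * z - 1 + 1)%C with (RtoC 2 * z)%C by ring.
      rewrite Cmod_mult, Cmod_R, Rabs_pos_eq; lra. }
  pose proof (le_root_of_pow_ge d L (Cmod z) ltac:(lia) HL Hroot
                (conj (Cmod_ge_0 z) Hz) Hmod) as HzL.
  pose proof (Cpow_sub_Cmod_le z L d ltac:(lra) HzL) as Hcontr.
  replace (z ^ d - L ^ d)%C with (2 * (z - L))%C in Hcontr
    by (rewrite Hzroot, <- RtoC_pow, Hroot, RtoC_minus, RtoC_mult; ring).
  rewrite Cmod_mult, Cmod_R, Rabs_pos_eq in Hcontr by lra.
  pose proof (root_deriv_lt d L ltac:(lia) HL Hroot).
  replace (pred d) with (d - 1)%nat in Hcontr by lia.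
  pose proof (Cmod_ge_0 (z - L)).
  apply Ceq_minus, Cmod_eq_0. nra.
Qed.

Theorem mainTheorem5 (d : nat) (hd : (1 <= d)%nat) :
  ((d <= 2)%nat -> Un_cv (Pfin d) 1) /\
  ((2 < d)%nat ->
     (exists! z : Cx, Cnorm2 z < 1 /\ g d z = (0, 0)) /\
     (forall z : Cx, Cnorm2 z < 1 -> g d z = (0, 0) ->
        snd z = 0 /\ 1/2 < fst z < 1 /\ Un_cv (Pfin d) (fst z))).
Proof.
  destruct (Pfin_cv d) as [L [HcvL HL]]. split.
  - intro hd2. rewrite <- (phi_least_prefixpoint_le2 d L) by (lia || exact HL). exact HcvL.
  - intro hd3. destruct (phi_least_prefixpoint_gt2 d L hd3 HL) as [HL01 Hroot].
    assert (Hunique : forall z, Cnorm2 z < 1 -> g d z = (0, 0) -> z = RtoC L).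
    { intros z Hz Hg. apply (disk_root_unique d L ltac:(lia)); [lra | exact Hroot | |].
      - apply Cmod_lt_1, Hz.
      - apply g_zero_iff, Hg. }
    split.
    + exists (RtoC L). split.
      * split; [unfold Cnorm2; simpl; nra|].
        apply g_zero_iff. rewrite <- RtoC_pow, Hroot, RtoC_minus, RtoC_mult. reflexivity.
      * intros z [Hz Hg]. symmetry. exact (Hunique z Hz Hg).
    + intros z Hz Hg. rewrite (Hunique z Hz Hg). simpl.
      split; [reflexivity | split; [lra | exact HcvL]].
Qed.
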